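(* Let $S_j$ be local potentials satisfying (A)–(E), and let $(p_1,q_1),\dots,(p_d,q_d)\in\mathbb{Z}^d\times\mathbb{Z}$ with $p_1,\dots,p_d$ linearly independent. Then every minimizer $x$ of $W_{p,q}$ on $\mathbb{X}_{p,q}$ is a global minimizer.
   Context: Notation: $\|i\|=\sum_{k=1}^d|i_k|$, $B_j^r=\{k:\|k-j\|\le r\}$, $(\tau_{k,l}x)_i=x_{i+k}+l$. Local potentials $S_j:\mathbb{R}^{\mathbb{Z}^d}\to\mathbb{R}$, $j\in\mathbb{Z}^d$, satisfy: (A) there is $r\in(0,\infty)$ and $C^2$ functions $s_j:\mathbb{R}^{B_j^r}\to\mathbb{R}$ with $S_j(x)=s_j(x|_{B_j^r})$; (B) $S_j(\tau_{k,l}x)=S_{j+k}(x)$; (C) each $S_j$ is bounded below and $S_j(x)\to\infty$ as $|x_k-x_j|\to\infty$ whenever $\|k-j\|=1$; (D) $\partial_{i,k}S_j\le0$ for $i\ne k$, and $\partial_{i,k}S_i<0$ when $\|i-k\|=1$; (E) $|\partial_{i,k}S_j|\le C$ uniformly. With $p$ the matrix with columns $p_j$: $B_p=p([0,1)^d)\cap\mathbb{Z}^d$, $\mathbb{X}_{p,q}=\{x:\tau_{p_j,q_j}x=x\ \forall j\}$, $W_{p,q}(x)=\sum_{j\in B_p}S_j(x)$. For finite $B\subset\mathbb{Z}^d$: $W_B(x)=\sum_{j\in B}S_j(x)$ and $\mathring{B}^{(r)}=\{i\in B:B_i^r\subset B\}$. A configuration $x$ is a global minimizer if $W_B(x+y)\ge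 W_B(x)$ for every finite $B\subset\mathbb{Z}^d$ and every $y\in\mathbb{R}^{\mathbb{Z}^d}$ with support in $\mathring{B}^{(r)}$. *)

From Stdlib Require Import Reals Lra Lia ZArith List Eqdep_dec.
Import ListNotations.
Open Scope R_scope.

Definition Zd (d : nat) := { v : list Z | length v = d }.

Definition comp {d} (v : Zd d) (m : nat) : Z := nth m (proj1_sig v) 0%Z.

Fixpoint lzip (f : Z -> Z -> Z) (a b : list Z) : list Z :=
  match a, b with
  | x :: a', y :: b' => f x y :: lzip f a' b'
  | _, _ => nil
  end.

Lemma lzip_length f a b : length a = length b -> length (lzip f a b) = length a.
Proof.
  revert b; induction a as [|x a IH]; intros [|y b] H; simpl in *; try easy.
  f_equal; apply IH; lia.
Qed.

Definition vadd {d} (v w : Zd d) : Zd d :=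
  exist _ (lzip Z.add (proj1_sig v) (proj1_sig w))
    (eq_trans (lzip_length _ _ _ (eq_trans (proj2_sig v) (eq_sym (proj2_sig w))))
              (proj2_sig v)).

Definition vsub {d} (v w : Zd d) : Zd d :=
  exist _ (lzip Z.sub (proj1_sig v) (proj1_sig w))
    (eq_trans (lzip_length _ _ _ (eq_trans (proj2_sig v) (eq_sym (proj2_sig w))))
              (proj2_sig v)).

Definition norm1 {d} (v : Zd d) : Z :=
  fold_right (fun z acc => (Z.abs z + acc)%Z) 0%Z (proj1_sig v).

Lemma Zd_eq_dec {d} (v w : Zd d) : {v = w} + {v <> w}.
Proof.
  destruct v as [v Hv], w as [w Hw].
  destruct (list_eq_dec Z.eq_dec v w) as [E|E].
  - left. subst w. f_equal. apply UIP_dec, Nat.eq_dec.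
  - right. intros H. inversion H. contradiction.
Defined.

Definition in_ball {d} (j : Zd d) (r : R) (k : Zd d) : Prop :=
  IZR (norm1 (vsub k j)) <= r.

Definition Conf (d : nat) := Zd d -> R.

Definition tau {d} (k : Zd d) (l : Z) (x : Conf d) : Conf d :=
  fun i => x (vadd i k) + IZR l.

Definition bump {d} (x : Conf d) (i : Zd d) (t : R) : Conf d :=
  fun k => if Zd_eq_dec k i then x k + t else x k.

Definition conf_add {d} (x y : Conf d) : Conf d := fun i => x i + y i.

Definition is_partial {d} (f : Conf d -> R) (i : Zd d) (g : Conf d -> R) : Prop :=
  forall x, derivable_pt_lim (fun t => f (bump x i t)) 0 (g x).

Definition cont_on_ball {d} (j : Zd d) (r : R) (f : Conf d -> R) : Prop :=
  forall x eps, 0 < eps -> exists delta, 0 < delta /\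
    forall y, (forall k, in_ball j r k -> Rabs (y k - x k) < delta) ->
      Rabs (f y - f x) < eps.

(* (A): S_j(x) = s_j(x|_{B_j^r}) *)
Definition local_pot {d} (S : Zd d -> Conf d -> R) (r : R) : Prop :=
  forall j x y, (forall k, in_ball j r k -> x k = y k) -> S j x = S j y.

(* (A), C^2 part: s_j is C^2, expressed as: all first and second partial
   derivatives exist and are continuous in the variables x|_{B_j^r}.
   D2 j i k = \partial_{i,k} S_j = \partial_k \partial_i S_j. *)
Definition C2_pot {d} (S : Zd d -> Conf d -> R) (r : R)
  (D2 : Zd d -> Zd d -> Zd d -> Conf d -> R) : Prop :=
  exists D1 : Zd d -> Zd d -> Conf d -> R,
    (forall j i, is_partial (S j) i (D1 j i)) /\
    (forall j i k, is_partial (D1 j i) k (D2 j i k)) /\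
    (forall j i, cont_on_ball j r (D1 j i)) /\
    (forall j i k, cont_on_ball j r (D2 j i k)).

(* W_B(x) = sum_{j in B} S_j(x), B a finite set given as a duplicate-free list *)
Definition W_B {d} (S : Zd d -> Conf d -> R) (B : list (Zd d)) (x : Conf d) : R :=
  fold_right (fun j acc => S j x + acc) 0 B.

Definition in_interior {d} (r : R) (B : list (Zd d)) (i : Zd d) : Prop :=
  In i B /\ forall k, in_ball i r k -> In k B.

Definition global_minimizer {d} (S : Zd d -> Conf d -> R) (r : R) (x : Conf d) : Prop :=
  forall (B : list (Zd d)) (y : Conf d), NoDup B ->
    (forall i, y i <> 0 -> in_interior r B i) ->
    W_B S B x <= W_B S B (conf_add x y).

Definition sumR (n : nat) (f : nat -> R) : R :=
  fold_right Rplus 0 (map f (seq 0 n)).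

Definition lin_indep {d} (p : nat -> Zd d) : Prop :=
  forall c : nat -> R,
    (forall m, (m < d)%nat -> sumR d (fun j => c j * IZR (comp (p j) m)) = 0) ->
    forall j, (j < d)%nat -> c j = 0.

Definition in_Bp {d} (p : nat -> Zd d) (z : Zd d) : Prop :=
  exists t : nat -> R, (forall j, (j < d)%nat -> 0 <= t j < 1) /\
    forall m, (m < d)%nat -> IZR (comp z m) = sumR d (fun j => t j * IZR (comp (p j) m)).

Definition in_Xpq {d} (p : nat -> Zd d) (q : nat -> Z) (x : Conf d) : Prop :=
  forall j, (j < d)%nat -> forall i, tau (p j) (q j) x i = x i.

From Pilot Require Import Defs.
From Stdlib Require Import Reals ZArith List.
Open Scope R_scope.
From Stdlib Require Import Lra Lia Eqdep_dec FunctionalExtensionality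
  Permutation Sorting ClassicalEpsilon.
From mathcomp Require all_boot all_algebra Rstruct.
Import ListNotations.
(* Let Defs.comp (lattice coordinates) shadow Ranalysis1.comp. *)
Import Defs.

(* Let x minimize W_{p,q} on X_{p,q}.  The proof has four ingredients.
   1. Submodularity: since the mixed partials of S_j are nonpositive,
      S_j(a ∨ b) + S_j(a ∧ b) <= S_j(a) + S_j(b) for the coordinatewise max
      and min; this is proved one coordinate at a time with the mean value
      theorem, using that S_j only depends on the finite ball B_j^r.
   2. Lattice sorting: replacing pairs (a, b) by (a ∨ b, a ∧ b) sorts a finite
      family of configurations coordinatewise and, by 1, does not increase
      the sum of a submodular function over the family.
   3. Lattice geometry: as p is invertible, every site is uniquely u + p n
      with u ∈ B_p and n ∈ Z^d, and a periodic x satisfies x_{i+pn} + q·n = x_i.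
   4. Core inequality, for y >= 0 supported in the interior of B: the
      configurations x^k_i = x_i + (k-th largest value of y on the p-orbit of
      i inside B) are periodic, so W_{p,q}(x^k) >= W_{p,q}(x).  Near each site
      of B_p they coincide with the lattice sort of the p-translates of x + y,
      whence W_B(x + y) - W_B(x) >= Σ_k (W_{p,q}(x^k) - W_{p,q}(x)) >= 0.
   A general y is split into y⁺ and y⁻; the case y⁻ follows from 4 applied to
   the reflected potential z ↦ S(-z), and the two are glued by submodularity. *)

Set Bullet Behavior "Strict Subproofs".

Definition sumZ (n : nat) (f : nat -> Z) : Z := fold_right Z.add 0%Z (map f (seq 0 n)).

Lemma sumZ_S n f : sumZ (S n) f = (f 0%nat + sumZ n (fun m => f (S m)))%Z.
Proof. unfold sumZ. simpl. rewrite <- seq_shift, map_map. reflexivity. Qed.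

Lemma sumR_S n f : sumR (S n) f = f 0%nat + sumR n (fun m => f (S m)).
Proof. unfold sumR. simpl. rewrite <- seq_shift, map_map. reflexivity. Qed.

Lemma sumZ_ext n f g : (forall m, (m < n)%nat -> f m = g m) -> sumZ n f = sumZ n g.
Proof.
  revert f g; induction n; intros f g H; [reflexivity|].
  rewrite !sumZ_S, H by lia. f_equal. apply IHn. intros; apply H; lia.
Qed.

Lemma sumR_ext n f g : (forall m, (m < n)%nat -> f m = g m) -> sumR n f = sumR n g.
Proof.
  revert f g; induction n; intros f g H; [reflexivity|].
  rewrite !sumR_S, H by lia. f_equal. apply IHn. intros; apply H; lia.
Qed.

Lemma sumZ_zero n : sumZ n (fun _ => 0%Z) = 0%Z.
Proof. induction n; [reflexivity|]. rewrite sumZ_S, IHn. reflexivity. Qed.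

Lemma sumZ_add n f g : sumZ n (fun m => f m + g m)%Z = (sumZ n f + sumZ n g)%Z.
Proof. revert f g; induction n; intros; [reflexivity|]. rewrite !sumZ_S, IHn. lia. Qed.

Lemma sumZ_sub n f g : sumZ n (fun m => f m - g m)%Z = (sumZ n f - sumZ n g)%Z.
Proof. revert f g; induction n; intros; [reflexivity|]. rewrite !sumZ_S, IHn. lia. Qed.

Lemma sumR_add n f g : sumR n (fun m => f m + g m) = sumR n f + sumR n g.
Proof.
  revert f g; induction n; intros; [unfold sumR; simpl; lra|]. rewrite !sumR_S, IHn. lra.
Qed.

Lemma sumR_sub n f g : sumR n (fun m => f m - g m) = sumR n f - sumR n g.
Proof.
  revert f g; induction n; intros; [unfold sumR; simpl; lra|]. rewrite !sumR_S, IHn. lra.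
Qed.

Lemma sumR_IZR n f : IZR (sumZ n f) = sumR n (fun m => IZR (f m)).
Proof.
  revert f; induction n; intros; [reflexivity|].
  rewrite sumZ_S, sumR_S, plus_IZR, IHn. reflexivity.
Qed.

Lemma sumZ_delta n k a : (k < n)%nat ->
  sumZ n (fun j => if Nat.eq_dec j k then a else 0%Z) = a.
Proof.
  revert k; induction n; intros k Hk; [lia|].
  rewrite sumZ_S. destruct k as [|k].
  - rewrite (sumZ_ext _ _ (fun _ => 0%Z)), sumZ_zero by (intros; destruct Nat.eq_dec; lia).
    destruct Nat.eq_dec; lia.
  - rewrite (sumZ_ext _ _ (fun j => if Nat.eq_dec j k then a else 0%Z)), IHn by
      (try intros m _; repeat destruct Nat.eq_dec; lia).
    destruct Nat.eq_dec; lia.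
Qed.

Lemma sumZ_ge_term n f k : (forall m, (m < n)%nat -> (0 <= f m)%Z) -> (k < n)%nat ->
  (f k <= sumZ n f)%Z.
Proof.
  revert f k; induction n; intros f k Hf Hk; [lia|].
  assert (Hpos : forall g, (forall m, (m < n)%nat -> (0 <= g m)%Z) -> (0 <= sumZ n g)%Z).
  { clear. induction n; intros g Hg; [reflexivity|].
    rewrite sumZ_S. pose proof (Hg 0%nat ltac:(lia)).
    pose proof (IHn (fun m => g (S m)) ltac:(intros; apply Hg; lia)). lia. }
  rewrite sumZ_S. pose proof (Hf 0%nat ltac:(lia)). destruct k as [|k].
  - pose proof (Hpos (fun m => f (S m)) ltac:(intros; apply Hf; lia)). lia.
  - pose proof (IHn (fun m => f (S m)) k ltac:(intros; apply Hf; lia) ltac:(lia)).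
    cbv beta in *. lia.
Qed.

Definition lsum {X : Type} (f : X -> R) (l : list X) : R :=
  fold_right (fun a acc => f a + acc) 0 l.

Lemma lsum_map {X Y} (f : Y -> R) (g : X -> Y) l : lsum f (map g l) = lsum (fun a => f (g a)) l.
Proof. induction l; simpl; auto. rewrite IHl; auto. Qed.

Lemma lsum_ext_in {X} (f g : X -> R) l : (forall a, In a l -> f a = g a) -> lsum f l = lsum g l.
Proof.
  induction l; intros H; simpl; auto.
  rewrite H, IHl; simpl; auto. intros; apply H; simpl; auto.
Qed.

Lemma lsum_le_in {X} (f g : X -> R) l : (forall a, In a l -> f a <= g a) -> lsum f l <= lsum g l.
Proof.
  induction l; intros H; simpl; [lra|].
  pose proof (H a (or_introl eq_refl)). pose proof (IHl (fun b Hb => H b (or_intror Hb))). lra.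
Qed.

Lemma lsum_plus {X} (f g : X -> R) l : lsum (fun a => f a + g a) l = lsum f l + lsum g l.
Proof. induction l; simpl; [lra|]. rewrite IHl. lra. Qed.

Lemma lsum_minus {X} (f g : X -> R) l : lsum (fun a => f a - g a) l = lsum f l - lsum g l.
Proof. induction l; simpl; [lra|]. rewrite IHl. lra. Qed.

Lemma lsum_zero {X} (l : list X) : lsum (fun _ => 0) l = 0.
Proof. induction l; simpl; auto. rewrite IHl; lra. Qed.

Lemma lsum_const {X Y} (c : R) (l1 : list X) (l2 : list Y) :
  length l1 = length l2 -> lsum (fun _ => c) l1 = lsum (fun _ => c) l2.
Proof.
  revert l2; induction l1; intros [|b l2] Hl; simpl in *; try lia; auto.
  rewrite (IHl1 l2) by lia. reflexivity.
Qed.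

Lemma lsum_swap {X Y} (f : X -> Y -> R) la lb :
  lsum (fun a => lsum (fun b => f a b) lb) la = lsum (fun b => lsum (fun a => f a b) la) lb.
Proof. induction la; simpl; [rewrite lsum_zero; auto|]. rewrite IHla, <- lsum_plus. auto. Qed.

Lemma lsum_nonneg {X} (f : X -> R) l : (forall a, In a l -> 0 <= f a) -> 0 <= lsum f l.
Proof. intros H. rewrite <- (lsum_zero l). apply lsum_le_in. auto. Qed.

Lemma lsum_delta {X} (eq_dec : forall a b : X, {a = b} + {a <> b}) (u : X) c l :
  NoDup l -> In u l -> lsum (fun j => if eq_dec u j then c else 0) l = c.
Proof.
  induction l; intros Hn Hu; simpl; [contradiction|]. inversion Hn; subst.
  destruct eq_dec as [<-|Hne].
  - rewrite (lsum_ext_in _ (fun _ => 0)), lsum_zero; [lra|].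
    intros b Hb. destruct eq_dec; congruence.
  - destruct Hu; [congruence|]. rewrite IHl; auto. lra.
Qed.

Section Vectors.
Variable d : nat.

Lemma nth_lzip f a b m : length a = length b -> f 0%Z 0%Z = 0%Z ->
  nth m (lzip f a b) 0%Z = f (nth m a 0%Z) (nth m b 0%Z).
Proof.
  revert b m; induction a as [|x a IH]; intros [|y b] m H H0; simpl in *; try lia;
    destruct m; auto.
Qed.

Lemma comp_vadd (v w : Zd d) m : comp (vadd v w) m = (comp v m + comp w m)%Z.
Proof. apply nth_lzip; [rewrite (proj2_sig v), (proj2_sig w)|]; reflexivity. Qed.

Lemma comp_vsub (v w : Zd d) m : comp (vsub v w) m = (comp v m - comp w m)%Z.
Proof. apply nth_lzip; [rewrite (proj2_sig v), (proj2_sig w)|]; reflexivity. Qed.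

Lemma Zd_ext (v w : Zd d) : (forall m, (m < d)%nat -> comp v m = comp w m) -> v = w.
Proof.
  destruct v as [v Hv], w as [w Hw]. unfold comp; simpl. intros H.
  assert (v = w) as <- by (apply nth_ext with 0%Z 0%Z; [lia|intros n Hn; apply H; lia]).
  f_equal. apply UIP_dec, Nat.eq_dec.
Qed.

Definition mkZd (f : nat -> Z) : Zd d :=
  exist _ (map f (seq 0 d)) (eq_trans (length_map _ _) (length_seq _ _)).

Lemma comp_mkZd f m : (m < d)%nat -> comp (mkZd f) m = f m.
Proof.
  intros H. unfold comp, mkZd; simpl.
  rewrite nth_indep with (d' := f 0%nat) by (rewrite length_map, length_seq; lia).
  rewrite map_nth, seq_nth by lia. reflexivity.
Qed.

Lemma norm1_sum (v : Zd d) : norm1 v = sumZ d (fun m => Z.abs (comp v m)).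
Proof.
  destruct v as [l Hl]. unfold norm1, comp; simpl. subst d.
  induction l as [|z l IH]; [reflexivity|]. simpl length. rewrite sumZ_S. simpl. rewrite IH. reflexivity.
Qed.

Definition vzero : Zd d := mkZd (fun _ => 0%Z).

Lemma vadd_assoc (a b c : Zd d) : vadd (vadd a b) c = vadd a (vadd b c).
Proof. apply Zd_ext; intros. rewrite !comp_vadd. lia. Qed.

Lemma vadd_zero (a : Zd d) : vadd a vzero = a.
Proof. apply Zd_ext; intros. rewrite comp_vadd. unfold vzero. rewrite comp_mkZd by auto. lia. Qed.

Lemma vsub_vadd (a b : Zd d) : vadd (vsub a b) b = a.
Proof. apply Zd_ext; intros. rewrite comp_vadd, comp_vsub. lia. Qed.

Lemma vadd_cancel (a b c : Zd d) : vadd a c = vadd b c -> a = b.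
Proof.
  intros E. apply Zd_ext; intros m Hm. apply (f_equal (fun v => comp v m)) in E.
  rewrite !comp_vadd in E. lia.
Qed.

Lemma vadd_cancel_l (a b c : Zd d) : vadd c a = vadd c b -> a = b.
Proof.
  intros E. apply Zd_ext; intros m Hm. apply (f_equal (fun v => comp v m)) in E.
  rewrite !comp_vadd in E. lia.
Qed.

Lemma norm1_vsub_sym (a b : Zd d) : norm1 (vsub a b) = norm1 (vsub b a).
Proof. rewrite !norm1_sum. apply sumZ_ext. intros. rewrite !comp_vsub. lia. Qed.

Lemma norm1_vsub_shift (a b c : Zd d) : norm1 (vsub (vadd a c) (vadd b c)) = norm1 (vsub a b).
Proof. rewrite !norm1_sum. apply sumZ_ext. intros. rewrite !comp_vsub, !comp_vadd. f_equal. lia. Qed.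

End Vectors.

(* Linearly independent vectors p_0, ..., p_{d-1} of R^d span R^d: their
   matrix has nonzero determinant, so it is invertible. *)
Module LinAlg.
Import all_boot all_algebra Rstruct.
Import GRing.Theory.
Local Open Scope ring_scope.

Lemma sumR_big n (f : nat -> R) : sumR n f = \sum_(j < n) f j.
Proof.
rewrite /sumR -(big_mkord xpredT f) /index_iota subn0.
elim: n 0%nat => [|n IH] k; first by rewrite big_nil.
by rewrite /= big_cons IH.
Qed.

Lemma span_of_indep d (a : nat -> nat -> R) :
  (forall c : nat -> R,
     (forall m, lt m d -> sumR d (fun j => Rmult (c j) (a j m)) = R0) ->
     forall j, lt j d -> c j = R0) ->
  forall v : nat -> R, exists s : nat -> R,
    forall m, lt m d -> sumR d (fun j => Rmult (s j) (a j m)) = v m.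
Proof.
move=> indep v.
pose ext (w : 'rV[R]_d) (j : nat) :=
  if (insub j : option 'I_d) is Some k then w ord0 k else 0.
have extE w (k : 'I_d) : ext w k = w ord0 k by rewrite /ext valK.
pose A := (\matrix_(j < d, m < d) a j m : 'M[R]_d).
have mulA w (m : 'I_d) : (w *m A) ord0 m = sumR d (fun j => Rmult (ext w j) (a j m)).
  by rewrite mxE sumR_big; apply: eq_bigr => k _; rewrite extE mxE.
have detA : \det A != 0.
  apply/negP => /det0P [w nw0 wA]; case/negP: nw0; apply/eqP/rowP => j.
  rewrite mxE -extE; apply: (indep (ext w)); last exact/ltP.
  move=> m /ltP ltm; have := congr1 (fun M : 'rV[R]_d => M ord0 (Ordinal ltm)) wA.
  by rewrite mulA mxE.
have uA : A \in unitmx by rewrite unitmxE unitfE.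
pose vr := (\row_(m < d) v m : 'rV[R]_d).
exists (ext (vr *m invmx A)) => m /ltP ltm.
by rewrite -(mulA _ (Ordinal ltm)) mulmxKV // mxE.
Qed.
End LinAlg.

Definition unitv (k : nat) : nat -> Z := fun j => if Nat.eq_dec j k then 1%Z else 0%Z.

(* A predicate on coefficient sequences (read modulo their values on 0..d-1)
   that is closed under subtraction and holds on the basis vectors holds
   everywhere: a subgroup of Z^d containing the basis is all of Z^d. *)
Lemma subgroup_full d (G : (nat -> Z) -> Prop) :
  (forall a b, (forall j, (j < d)%nat -> a j = b j) -> G a -> G b) ->
  G (fun _ => 0%Z) ->
  (forall a b, G a -> G b -> G (fun j => a j - b j)%Z) ->
  (forall k, (k < d)%nat -> G (unitv k)) ->
  forall n, G n.
Proof.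
  intros Gext G0 Gsub Gunit n.
  assert (Gadd : forall a b, G a -> G b -> G (fun j => a j + b j)%Z).
  { intros a b Ga Gb. apply (Gext (fun j => a j - (0 - b j))%Z); [intros; lia|].
    apply Gsub, Gsub; auto. }
  assert (Gline : forall k c, (k < d)%nat -> G (fun j => c * unitv k j)%Z).
  { intros k c Hk. induction c using Z.peano_ind.
    - apply (Gext (fun _ => 0%Z)); [intros; lia|auto].
    - apply (Gext (fun j => c * unitv k j + unitv k j)%Z); [intros; lia|auto].
    - apply (Gext (fun j => c * unitv k j - unitv k j)%Z); [intros; lia|auto]. }
  assert (Gtrunc : forall k, G (fun j => if Nat.ltb j k then n j else 0%Z)).
  { induction k.
    - apply (Gext (fun _ => 0%Z)); auto.
    - destruct (Nat.lt_ge_cases k d) as [Hk|Hk].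
      + apply (Gext (fun j => (if Nat.ltb j k then n j else 0) + n k * unitv k j)%Z).
        * intros j _. unfold unitv.
          destruct (Nat.ltb_spec j (S k)), (Nat.ltb_spec j k), Nat.eq_dec; subst; lia.
        * apply Gadd; auto.
      + apply (Gext (fun j => if Nat.ltb j k then n j else 0%Z)); auto.
        intros j Hj. destruct (Nat.ltb_spec j (S k)), (Nat.ltb_spec j k); lia. }
  apply (Gext (fun j => if Nat.ltb j d then n j else 0%Z)); [|apply Gtrunc].
  intros j Hj. destruct (Nat.ltb_spec j d); lia.
Qed.

Section Lattice.
Variable d : nat.
Variable p : nat -> Zd d.

Definition Pv (n : nat -> Z) : Zd d :=
  mkZd d (fun m => sumZ d (fun j => n j * comp (p j) m)%Z).

Lemma comp_Pv n m : (m < d)%nat -> comp (Pv n) m = sumZ d (fun j => n j * comp (p j) m)%Z.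
Proof. apply comp_mkZd. Qed.

Lemma IZR_comp_Pv n m : (m < d)%nat ->
  IZR (comp (Pv n) m) = sumR d (fun j => IZR (n j) * IZR (comp (p j) m)).
Proof.
  intros Hm. rewrite comp_Pv, sumR_IZR by auto. apply sumR_ext. intros; apply mult_IZR.
Qed.

Lemma Pv_ext n1 n2 : (forall j, (j < d)%nat -> n1 j = n2 j) -> Pv n1 = Pv n2.
Proof. intros H; apply Zd_ext; intros m Hm. rewrite !comp_Pv by auto. apply sumZ_ext; intros. rewrite H; auto. Qed.

Lemma Pv_add n1 n2 : Pv (fun j => n1 j + n2 j)%Z = vadd (Pv n1) (Pv n2).
Proof.
  apply Zd_ext; intros m Hm. rewrite comp_vadd, !comp_Pv, <- sumZ_add by auto.
  apply sumZ_ext; intros; lia.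
Qed.

Lemma Pv_sub n1 n2 : Pv (fun j => n1 j - n2 j)%Z = vsub (Pv n1) (Pv n2).
Proof.
  apply Zd_ext; intros m Hm. rewrite comp_vsub, !comp_Pv, <- sumZ_sub by auto.
  apply sumZ_ext; intros; lia.
Qed.

Lemma Pv_zero : Pv (fun _ => 0%Z) = vzero d.
Proof.
  apply Zd_ext; intros m Hm. rewrite comp_Pv by auto. unfold vzero. rewrite comp_mkZd by auto.
  rewrite (sumZ_ext _ _ (fun _ => 0%Z)); [apply sumZ_zero|intros; lia].
Qed.

Lemma Pv_unit k : (k < d)%nat -> Pv (unitv k) = p k.
Proof.
  intros Hk; apply Zd_ext; intros m Hm. rewrite comp_Pv by auto.
  rewrite <- (sumZ_delta d k (comp (p k) m)) by auto.
  apply sumZ_ext. intros j _. unfold unitv. destruct Nat.eq_dec; subst; lia.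
Qed.

Hypothesis indep : lin_indep p.

Lemma p_spans (v : nat -> R) : exists s : nat -> R,
  forall m, (m < d)%nat -> sumR d (fun j => s j * IZR (comp (p j) m)) = v m.
Proof. apply (LinAlg.span_of_indep d (fun j m => IZR (comp (p j) m))), indep. Qed.

Lemma p_coords_unique (a b : nat -> R) :
  (forall m, (m < d)%nat ->
     sumR d (fun j => a j * IZR (comp (p j) m)) = sumR d (fun j => b j * IZR (comp (p j) m))) ->
  forall j, (j < d)%nat -> a j = b j.
Proof.
  intros H j Hj. enough (a j - b j = 0) by lra.
  apply (indep (fun j => a j - b j)); auto. intros m Hm.
  rewrite (sumR_ext _ _ (fun j => a j * IZR (comp (p j) m) - b j * IZR (comp (p j) m)))
    by (intros; ring).
  rewrite sumR_sub, H by auto. ring.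
Qed.

Variable Lp : list (Zd d).
Hypothesis HLp : forall z, In z Lp <-> in_Bp p z.

(* Every site is u + P n with u ∈ B_p: take n = ⌊coordinates⌋. *)
Lemma Bp_decomposition v : exists u n, In u Lp /\ v = vadd u (Pv n).
Proof.
  destruct (p_spans (fun m => IZR (comp v m))) as [s Hs].
  set (n := fun j => Int_part (s j)).
  exists (vsub v (Pv n)), n. split; [|symmetry; apply vsub_vadd].
  apply HLp. exists (fun j => s j - IZR (n j)). split.
  - intros j _. pose proof (base_Int_part (s j)). unfold n. lra.
  - intros m Hm. rewrite comp_vsub, minus_IZR, IZR_comp_Pv, <- Hs, <- sumR_sub by auto.
    apply sumR_ext; intros; ring.
Qed.

(* The decomposition is unique: coordinates of points of B_p lie in [0,1). *)
Lemma Bp_decomposition_unique u u' n n' : In u Lp -> In u' Lp ->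
  vadd u (Pv n) = vadd u' (Pv n') -> u = u' /\ Pv n = Pv n'.
Proof.
  intros Hu Hu' E. apply HLp in Hu as [t [Ht Hut]]. apply HLp in Hu' as [t' [Ht' Hut']].
  assert (Hcoord : forall m, (m < d)%nat ->
    sumR d (fun j => (t j + IZR (n j)) * IZR (comp (p j) m)) =
    sumR d (fun j => (t' j + IZR (n' j)) * IZR (comp (p j) m))).
  { intros m Hm.
    assert (Hc : forall u n t, IZR (comp u m) = sumR d (fun j => t j * IZR (comp (p j) m)) ->
      IZR (comp (vadd u (Pv n)) m) = sumR d (fun j => (t j + IZR (n j)) * IZR (comp (p j) m))).
    { intros u0 n0 t0 H0. rewrite comp_vadd, plus_IZR, H0, IZR_comp_Pv, <- sumR_add by auto.
      apply sumR_ext; intros; ring. }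
    rewrite <- (Hc u n t), <- (Hc u' n' t'), E; auto. }
  assert (Hn : forall j, (j < d)%nat -> n j = n' j).
  { intros j Hj. pose proof (p_coords_unique _ _ Hcoord j Hj) as Hj'.
    specialize (Ht j Hj). specialize (Ht' j Hj).
    assert (Hlt : (-1 < IZR (n j - n' j) < 1)) by (rewrite minus_IZR; lra).
    destruct Hlt as [H1 H2]. apply lt_IZR in H1, H2. lia. }
  rewrite (Pv_ext n n' Hn) in E |- *. split; [|reflexivity].
  exact (vadd_cancel d _ _ _ E).
Qed.

Lemma Bp_decomposition_sig v :
  { un : Zd d * (nat -> Z) | In (fst un) Lp /\ v = vadd (fst un) (Pv (snd un)) }.
Proof.
  apply constructive_indefinite_description.
  destruct (Bp_decomposition v) as [u [n H]]. exists (u, n). exact H.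
Qed.

Definition rep v := fst (proj1_sig (Bp_decomposition_sig v)).
Definition nrep v := snd (proj1_sig (Bp_decomposition_sig v)).

Lemma rep_in v : In (rep v) Lp.
Proof. unfold rep. destruct (Bp_decomposition_sig v); simpl. tauto. Qed.

Lemma rep_eq v : v = vadd (rep v) (Pv (nrep v)).
Proof. unfold rep, nrep. destruct (Bp_decomposition_sig v); simpl. tauto. Qed.

Lemma rep_uniq v u n : In u Lp -> v = vadd u (Pv n) -> rep v = u /\ Pv (nrep v) = Pv n.
Proof.
  intros Hu E. apply Bp_decomposition_unique; auto using rep_in.
  rewrite <- rep_eq. exact E.
Qed.

Lemma rep_shift v n : rep (vadd v (Pv n)) = rep v.
Proof.
  apply (rep_uniq _ _ (fun j => nrep v j + n j)%Z (rep_in v)).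
  rewrite Pv_add, <- vadd_assoc, <- rep_eq. reflexivity.
Qed.

Lemma rep_same a b : rep a = rep b -> a = vadd b (Pv (fun j => nrep a j - nrep b j)%Z).
Proof.
  intros E. rewrite Pv_sub. apply Zd_ext; intros m Hm.
  rewrite (rep_eq a) at 1. rewrite (rep_eq b) at 1. rewrite E, !comp_vadd, comp_vsub. lia.
Qed.

End Lattice.

Section Periodicity.
Variable d : nat.
Variable p : nat -> Zd d.
Variable q : nat -> Z.
Variable x : Conf d.
Hypothesis Hx : in_Xpq p q x.

Definition Qv (n : nat -> Z) : Z := sumZ d (fun j => n j * q j)%Z.

Definition shift_invariant (lam : Zd d) (c : Z) : Prop := forall i, x (vadd i lam) + IZR c = x i.

Lemma periodic_shift n : shift_invariant (Pv d p n) (Qv n).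
Proof.
  apply (subgroup_full d (fun n => shift_invariant (Pv d p n) (Qv n))).
  - intros a b Hab Ha. rewrite <- (Pv_ext d p a b Hab).
    unfold Qv. rewrite <- (sumZ_ext d (fun j => a j * q j)%Z) by (intros; rewrite Hab; auto).
    exact Ha.
  - intros i. rewrite Pv_zero, vadd_zero. unfold Qv.
    rewrite (sumZ_ext _ _ (fun _ => 0%Z)), sumZ_zero by (intros; lia). simpl. lra.
  - intros a b Ha Hb i. rewrite Pv_sub. unfold Qv.
    rewrite (sumZ_ext _ _ (fun j => a j * q j - b j * q j)%Z) by (intros; lia).
    rewrite sumZ_sub, minus_IZR.
    specialize (Hb (vadd i (vsub (Pv d p a) (Pv d p b)))). rewrite vadd_assoc, vsub_vadd in Hb.
    specialize (Ha i). fold (Qv a) (Qv b). lra.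
  - intros k Hk i. rewrite Pv_unit by auto. unfold Qv.
    rewrite (sumZ_ext _ _ (fun j => if Nat.eq_dec j k then q k else 0%Z)), sumZ_delta by
      (auto; intros j _; unfold unitv; destruct Nat.eq_dec; subst; lia).
    apply (Hx k Hk i).
Qed.

Lemma tau_periodic n : tau (Pv d p n) (Qv n) x = x.
Proof. apply functional_extensionality; intro i. apply periodic_shift. Qed.

End Periodicity.

Section Submodularity.
Variable d : nat.

Definition cmax (a b : Conf d) : Conf d := fun i => Rmax (a i) (b i).
Definition cmin (a b : Conf d) : Conf d := fun i => Rmin (a i) (b i).

Lemma cmax_comm (a b : Conf d) : cmax a b = cmax b a.
Proof. apply functional_extensionality; intro; unfold cmax; apply Rmax_comm. Qed.

Lemma cmin_comm (a b : Conf d) : cmin a b = cmin b a.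
Proof. apply functional_extensionality; intro; unfold cmin; apply Rmin_comm. Qed.

Lemma bump_0 (x : Conf d) i : bump x i 0 = x.
Proof. apply functional_extensionality; intro k; unfold bump; destruct Zd_eq_dec; lra. Qed.

Lemma bump_bump (x : Conf d) i a b : bump (bump x i a) i b = bump x i (a + b).
Proof. apply functional_extensionality; intro k; unfold bump; destruct Zd_eq_dec; lra. Qed.

Lemma bump_comm (x : Conf d) i k a b : bump (bump x i a) k b = bump (bump x k b) i a.
Proof. apply functional_extensionality; intro j; unfold bump; repeat destruct Zd_eq_dec; lra. Qed.

Lemma partial_along (f g : Conf d -> R) i (x : Conf d) : is_partial f i g ->
  forall t0, derivable_pt_lim (fun t => f (bump x i t)) t0 (g (bump x i t0)).
Proof.
  intros H t0 eps Heps. destruct (H (bump x i t0) eps Heps) as [delta Hd].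
  exists delta. intros h Hh Hhd. specialize (Hd h Hh Hhd).
  rewrite !bump_bump, Rplus_0_l, Rplus_0_r in Hd. exact Hd.
Qed.

Lemma decreasing_of_deriv (G G' : R -> R) :
  (forall t, derivable_pt_lim G t (G' t)) -> (forall t, G' t <= 0) -> decreasing G.
Proof.
  intros HG HG'.
  apply (nonpos_derivative_1 G (fun t => exist _ (G' t) (HG t) : derivable_pt G t)).
  exact HG'.
Qed.

Definition decreasing_increments (f : Conf d -> R) (k : Zd d) : Prop :=
  forall c, c <> k -> forall v t s, 0 <= t -> 0 <= s ->
    f (bump (bump v c t) k s) - f (bump v c t) <= f (bump v k s) - f v.

Lemma decreasing_increments_of_partials (f g h : Conf d -> R) c k :
  is_partial f c g -> is_partial g k h -> (forall x, h x <= 0) -> c <> k ->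
  forall v t s, 0 <= t -> 0 <= s ->
  f (bump (bump v k s) c t) - f (bump v k s) <= f (bump v c t) - f v.
Proof.
  intros Hf Hg Hh Hck v t s Ht Hs.
  assert (Hg_dec : forall w, g (bump w k s) <= g w).
  { intros w.
    pose proof (decreasing_of_deriv _ _ (partial_along g h k w Hg) (fun _ => Hh _) 0 s Hs) as H.
    cbv beta in H. rewrite bump_0 in H. exact H. }
  assert (Hdec : decreasing (fun t => f (bump (bump v k s) c t) - f (bump v c t))).
  { apply (decreasing_of_deriv _ (fun t => g (bump (bump v k s) c t) - g (bump v c t))).
    - intros t0. apply derivable_pt_lim_minus; apply partial_along; auto.
    - intros t0. rewrite bump_comm. specialize (Hg_dec (bump v c t0)). lra. }
  specialize (Hdec 0 t Ht). cbv beta in Hdec. rewrite !bump_0 in Hdec. lra.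
Qed.

Section FiniteSupport.
Variable f : Conf d -> R.
Hypothesis Hinc : forall k, decreasing_increments f k.

(* Increments along k decrease from z to any w >= z agreeing with z at k
   and outside a finite set C; coordinates of C are raised one at a time. *)
Lemma increment_antitone C : forall (z w : Conf d) k s,
  (forall i, ~ In i C -> z i = w i) -> (forall i, z i <= w i) -> z k = w k -> 0 <= s ->
  f (bump w k s) - f w <= f (bump z k s) - f z.
Proof.
  induction C as [|c C IH]; intros z w k s Hout Hle Hk Hs.
  - replace w with z by (apply functional_extensionality; intros; apply Hout; auto). lra.
  - set (z' := bump z c (w c - z c)).
    assert (Hz' : f (bump w k s) - f w <= f (bump z' k s) - f z').
    { apply IH; auto; unfold z', bump.
      - intros i Hi. destruct Zd_eq_dec; [subst; lra|].
        apply Hout. intros [E|E]; [congruence|auto].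
      - intros i. destruct Zd_eq_dec; subst; [lra|auto].
      - destruct Zd_eq_dec; subst; [lra|auto]. }
    destruct (Zd_eq_dec c k) as [<-|Hck].
    + unfold z' in Hz'. rewrite Hk, Rminus_diag, bump_0 in Hz'. exact Hz'.
    + pose proof (Hinc k c Hck z (w c - z c) s ltac:(specialize (Hle c); lra) Hs) as H.
      fold z' in H. lra.
Qed.

(* The induction step of submodularity: the coordinate c where a <= b is
   moved from b to a, reducing to configurations that differ only on C. *)
Lemma submodular_step C (a b : Conf d) c :
  (forall a' b' : Conf d, (forall i, ~ In i C -> a' i = b' i) ->
     f (cmax a' b') + f (cmin a' b') <= f a' + f b') ->
  (forall i, ~ In i (c :: C) -> a i = b i) -> a c <= b c ->
  f (cmax a b) + f (cmin a b) <= f a + f b.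
Proof.
  intros IH Hout Hab.
  set (b' := bump b c (a c - b c)).
  assert (Hout' : forall i, ~ In i C -> a i = b' i).
  { intros i Hi. unfold b', bump. destruct Zd_eq_dec; [subst; lra|].
    apply Hout. intros [E|E]; [congruence|auto]. }
  assert (Emin : cmin a b' = cmin a b).
  { apply functional_extensionality; intro i. unfold cmin, b', bump.
    destruct Zd_eq_dec; [subst; unfold Rmin; repeat destruct Rle_dec; lra|auto]. }
  assert (Emax : bump (cmax a b') c (b c - a c) = cmax a b).
  { apply functional_extensionality; intro i. unfold cmax, b', bump.
    destruct Zd_eq_dec; [subst; unfold Rmax; repeat destruct Rle_dec; lra|auto]. }
  assert (Eb : bump b' c (b c - a c) = b).
  { apply functional_extensionality; intro i. unfold b', bump. destruct Zd_eq_dec; subst; lra. }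
  assert (Hinc_c : f (bump (cmax a b') c (b c - a c)) - f (cmax a b')
                   <= f (bump b' c (b c - a c)) - f b').
  { apply (increment_antitone C); [| |unfold cmax, b', bump|lra].
    - intros i Hi. unfold cmax. rewrite <- (Hout' i Hi), Rmax_left; lra.
    - intros i. unfold cmax. apply Rmax_r.
    - destruct Zd_eq_dec; [|congruence]. rewrite Rmax_left; lra. }
  rewrite Emax, Eb in Hinc_c. pose proof (IH a b' Hout'). rewrite Emin in *. lra.
Qed.

Lemma submodular_finite C : forall a b : Conf d, (forall i, ~ In i C -> a i = b i) ->
  f (cmax a b) + f (cmin a b) <= f a + f b.
Proof.
  induction C as [|c C IH]; intros a b Hout.
  - replace b with a by (apply functional_extensionality; intros; apply Hout; auto).
    replace (cmax a a) with a by (apply functional_extensionality; intro; unfold cmax; rewrite Rmax_left; lra).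
    replace (cmin a a) with a by (apply functional_extensionality; intro; unfold cmin; rewrite Rmin_left; lra).
    lra.
  - destruct (Rle_dec (a c) (b c)).
    + apply (submodular_step C a b c); auto.
    + rewrite cmax_comm, cmin_comm, (Rplus_comm (f a)).
      apply (submodular_step C b a c); [auto| |lra]. intros i Hi; symmetry; auto.
Qed.
End FiniteSupport.

(* Balls of Z^d are finite: B_j^r is covered by the box of side 2⌈r⌉+1. *)

Definition zrange (a : Z) (n : nat) : list Z := map (fun k => (a + Z.of_nat k)%Z) (seq 0 n).

Fixpoint box (R0 : Z) (cs : list Z) : list (list Z) :=
  match cs with
  | [] => [[]]
  | c :: cs' => flat_map (fun z => map (cons z) (box R0 cs')) (zrange (c - R0) (Z.to_nat (2 * R0 + 1)))
  end.

Lemma in_box R0 cs l : (0 <= R0)%Z -> length l = length cs ->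
  (forall m, (Z.abs (nth m l 0 - nth m cs 0) <= R0)%Z) -> In l (box R0 cs).
Proof.
  intros HR. revert l; induction cs as [|c cs IH]; intros [|z l] Hlen Hm; simpl in Hlen; try lia.
  - simpl. auto.
  - cbn [box]. apply in_flat_map. exists z. split.
    + apply in_map_iff. exists (Z.to_nat (z - (c - R0))). specialize (Hm 0%nat). simpl in Hm.
      split; [lia|]. apply in_seq. lia.
    + apply in_map, IH; [lia|]. intros m. apply (Hm (S m)).
Qed.

Lemma ball_finite (j : Zd d) (r : R) : exists C : list (Zd d), forall i, in_ball j r i -> In i C.
Proof.
  set (R0 := Z.max 0 (up r)).
  exists (map (fun l => mkZd d (fun m => nth m l 0%Z)) (box R0 (proj1_sig j))).
  intros i Hi. apply in_map_iff. exists (proj1_sig i). split.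
  - apply Zd_ext. intros m Hm. rewrite comp_mkZd by auto. reflexivity.
  - apply in_box; [lia|rewrite (proj2_sig i), (proj2_sig j); auto|].
    intros m. destruct (Nat.lt_ge_cases m d) as [Hm|Hm].
    + unfold in_ball in Hi. destruct (archimed r) as [Hr _].
      assert (Hlt : IZR (norm1 (vsub i j)) < IZR (up r)) by lra. apply lt_IZR in Hlt.
      pose proof (sumZ_ge_term d (fun m => Z.abs (comp (vsub i j) m)) m ltac:(intros; lia) Hm).
      rewrite <- norm1_sum, comp_vsub in *. unfold comp in *. lia.
    + rewrite !nth_overflow; [lia|rewrite (proj2_sig j)|rewrite (proj2_sig i)]; auto.
Qed.

Lemma local_pot_submodular (S : Zd d -> Conf d -> R) r D2 :
  local_pot S r -> C2_pot S r D2 -> (forall j i k x, i <> k -> D2 j i k x <= 0) ->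
  forall j (a b : Conf d), S j (cmax a b) + S j (cmin a b) <= S j a + S j b.
Proof.
  intros Hloc [D1 [HD1 [HD2 _]]] HD j a b.
  assert (Hinc : forall k, decreasing_increments (S j) k).
  { intros k c Hck v t s Ht Hs.
    apply (decreasing_increments_of_partials _ (D1 j k) (D2 j k c)); auto. }
  destruct (ball_finite j r) as [C HC].
  (* outside the ball, replace b by a: this changes none of the four values *)
  set (b' := fun i => if Rle_dec (IZR (norm1 (vsub i j))) r then b i else a i).
  assert (Hball : forall c c' : Conf d, (forall k, in_ball j r k -> c k = c' k) -> S j c = S j c')
    by (intros; apply Hloc; auto).
  assert (Hb' : forall k, in_ball j r k -> b' k = b k)
    by (intros k Hk; unfold b'; destruct Rle_dec; [auto|contradiction]).
  rewrite (Hball b b'), (Hball (cmax a b) (cmax a b')), (Hball (cmin a b) (cmin a b'))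
    by (intros k Hk; unfold cmax, cmin; rewrite Hb'; auto).
  apply (submodular_finite _ Hinc C). intros i Hi. unfold b'.
  destruct Rle_dec as [Hr|]; auto. exfalso. apply Hi, HC, Hr.
Qed.

End Submodularity.
Arguments cmax {d}. Arguments cmin {d}.

(* Sorting real numbers in decreasing order by insertion with max/min; the
   same insertion applied coordinatewise sorts families of configurations. *)

Fixpoint rinsert (v : R) (l : list R) : list R :=
  match l with
  | [] => [v]
  | w :: ws => Rmax v w :: rinsert (Rmin v w) ws
  end.

Definition rsort (l : list R) : list R := fold_right rinsert [] l.

Lemma rinsert_perm v l : Permutation (rinsert v l) (v :: l).
Proof.
  revert v; induction l as [|w ws IH]; intros v; simpl; auto.
  rewrite IH. unfold Rmax, Rmin. destruct Rle_dec; [apply perm_swap|reflexivity].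
Qed.

Lemma rsort_perm l : Permutation (rsort l) l.
Proof. induction l; simpl; auto. rewrite rinsert_perm, IHl. reflexivity. Qed.

Lemma rsort_length l : length (rsort l) = length l.
Proof. apply Permutation_length, rsort_perm. Qed.

Lemma rinsert_sorted v l : StronglySorted Rge l -> StronglySorted Rge (rinsert v l).
Proof.
  revert v; induction l as [|w ws IH]; intros v Hs; simpl; [repeat constructor|].
  inversion Hs as [|? ? Hws Hw]; subst. constructor; [apply IH; auto|].
  apply Forall_forall. intros z Hz. apply (Permutation_in _ (rinsert_perm _ _)) in Hz.
  rewrite Forall_forall in Hw. unfold Rmax, Rmin in *.
  destruct Hz as [<-|Hz]; [|specialize (Hw z Hz)]; destruct Rle_dec; lra.
Qed.

Lemma rsort_sorted l : StronglySorted Rge (rsort l).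
Proof. induction l; simpl; [constructor|apply rinsert_sorted; auto]. Qed.

Lemma sorted_perm_eq l1 l2 : StronglySorted Rge l1 -> StronglySorted Rge l2 ->
  Permutation l1 l2 -> l1 = l2.
Proof.
  revert l2; induction l1 as [|a t1 IH]; intros l2 H1 H2 HP.
  - symmetry. apply Permutation_nil, HP.
  - destruct l2 as [|b t2]; [apply Permutation_sym, Permutation_nil in HP; discriminate|].
    inversion H1 as [|? ? Ht1 Ha]; inversion H2 as [|? ? Ht2 Hb]; subst.
    assert (a = b) as <-.
    { assert (Ha' : In a (b :: t2)) by (eapply Permutation_in; [exact HP|left; auto]).
      assert (Hb' : In b (a :: t1)) by (eapply Permutation_in; [apply Permutation_sym, HP|left; auto]).
      rewrite Forall_forall in Ha, Hb.
      destruct Ha' as [|Ha']; auto. destruct Hb' as [|Hb']; auto.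
      specialize (Ha b Hb'). specialize (Hb a Ha'). lra. }
    f_equal. apply IH; auto. eapply Permutation_cons_inv; eauto.
Qed.

Lemma rsort_perm_eq l1 l2 : Permutation l1 l2 -> rsort l1 = rsort l2.
Proof.
  intros HP. apply sorted_perm_eq; try apply rsort_sorted.
  rewrite !rsort_perm. exact HP.
Qed.

Lemma rsort_shift c l : rsort (map (fun v => c + v) l) = map (fun v => c + v) (rsort l).
Proof.
  assert (Hins : forall v l, rinsert (c + v) (map (fun v => c + v) l) = map (fun v => c + v) (rinsert v l)).
  { intros v0 l0; revert v0; induction l0 as [|w ws IH]; intros v0; simpl; auto.
    rewrite <- IH. f_equal; [|f_equal]; unfold Rmax, Rmin; repeat destruct Rle_dec; lra. }
  induction l; simpl; auto. rewrite IHl, Hins. reflexivity.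
Qed.

Definition nonzero (v : R) : bool := if Req_dec_T v 0 then false else true.

Lemma nonzero_true v : nonzero v = true <-> v <> 0.
Proof. unfold nonzero; destruct Req_dec_T; split; intros; congruence. Qed.

Lemma rinsert_nonneg_zeros x l k : 0 <= x -> Forall (fun v => 0 <= v) l ->
  rinsert x (l ++ repeat 0 k) = rinsert x l ++ repeat 0 k.
Proof.
  revert x; induction l as [|w ws IH]; intros x Hx Hl; simpl.
  - revert x Hx. induction k; intros x Hx; simpl; auto.
    rewrite IHk by (unfold Rmin; destruct Rle_dec; lra).
    unfold Rmax, Rmin; destruct Rle_dec; [|reflexivity]. replace x with 0 by lra. reflexivity.
  - inversion Hl; subst. f_equal. apply IH; auto. unfold Rmin; destruct Rle_dec; lra.
Qed.

Lemma rinsert_zero l : Forall (fun v => 0 <= v) l -> rinsert 0 l = l ++ [0].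
Proof.
  induction l as [|w ws IH]; intros Hl; simpl; auto. inversion Hl; subst.
  replace (Rmax 0 w) with w by (unfold Rmax; destruct Rle_dec; lra).
  replace (Rmin 0 w) with 0 by (unfold Rmin; destruct Rle_dec; lra). rewrite IH; auto.
Qed.

Lemma rsort_nonneg l : Forall (fun v => 0 <= v) l -> Forall (fun v => 0 <= v) (rsort l).
Proof. intros H. rewrite Forall_forall in *. intros z Hz. apply H. eapply Permutation_in; [apply rsort_perm|exact Hz]. Qed.

Lemma rsort_split_zeros L : Forall (fun v => 0 <= v) L ->
  exists k, rsort L = rsort (filter nonzero L) ++ repeat 0 k.
Proof.
  induction L as [|x L IH]; intros HL; [exists 0%nat; reflexivity|].
  inversion HL as [|? ? Hx HL']; subst. destruct (IH HL') as [k Hk]. simpl. rewrite Hk.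
  assert (Hpos : Forall (fun v => 0 <= v) (rsort (filter nonzero L))).
  { apply rsort_nonneg. rewrite Forall_forall in *. intros z Hz. apply filter_In in Hz. apply HL'; tauto. }
  unfold nonzero at 2. destruct (Req_dec_T x 0) as [->|].
  - exists (S k). rewrite rinsert_nonneg_zeros, rinsert_zero, <- app_assoc by (auto; lra). reflexivity.
  - exists k. simpl. rewrite rinsert_nonneg_zeros; auto.
Qed.

Lemma nth_app_zeros l k n : nth n (l ++ repeat 0 k) 0 = nth n l 0.
Proof.
  destruct (Nat.lt_ge_cases n (length l)); [apply app_nth1; auto|].
  rewrite app_nth2, (nth_overflow l) by auto.
  destruct (Nat.lt_ge_cases (n - length l) k); [apply nth_repeat|].
  apply nth_overflow. rewrite repeat_length. auto.
Qed.

Lemma rsort_nth_nonzero_perm L1 L2 :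
  Forall (fun v => 0 <= v) L1 -> Forall (fun v => 0 <= v) L2 ->
  Permutation (filter nonzero L1) (filter nonzero L2) ->
  forall n, nth n (rsort L1) 0 = nth n (rsort L2) 0.
Proof.
  intros H1 H2 HP n. destruct (rsort_split_zeros L1 H1) as [k1 ->].
  destruct (rsort_split_zeros L2 H2) as [k2 ->].
  rewrite !nth_app_zeros, (rsort_perm_eq _ _ HP). reflexivity.
Qed.

Section ConfSort.
Variable d : nat.

Fixpoint cinsert (a : Conf d) (os : list (Conf d)) : list (Conf d) :=
  match os with
  | [] => [a]
  | o :: os' => cmax a o :: cinsert (cmin a o) os'
  end.

Definition csort (A : list (Conf d)) : list (Conf d) := fold_right cinsert [] A.

Lemma csort_coord A i : map (fun o => o i) (csort A) = rsort (map (fun a => a i) A).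
Proof.
  assert (Hins : forall a os, map (fun o => o i) (cinsert a os) = rinsert (a i) (map (fun o => o i) os)).
  { intros a os; revert a; induction os; intros; simpl; auto. rewrite IHos. reflexivity. }
  induction A; simpl; auto. rewrite Hins, IHA. reflexivity.
Qed.

Lemma csort_length A : length (csort A) = length A.
Proof.
  pose proof (f_equal (@length R) (csort_coord A (vzero d))) as H.
  rewrite !length_map, rsort_length, length_map in H. exact H.
Qed.

Lemma csort_sum (f : Conf d -> R) : (forall a b, f (cmax a b) + f (cmin a b) <= f a + f b) ->
  forall A, lsum f (csort A) <= lsum f A.
Proof.
  intros Hf. assert (Hins : forall a os, lsum f (cinsert a os) <= f a + lsum f os).
  { intros a os; revert a; induction os as [|o os IH]; intros a; simpl; [lra|].
    specialize (IH (cmin a o)). specialize (Hf a o). lra. }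
  induction A as [|a A IH]; simpl; [lra|]. specialize (Hins a (csort A)). lra.
Qed.

End ConfSort.

Lemma lsum_nth_seq {X} (g : X -> R) (dflt : X) L N : (length L <= N)%nat ->
  lsum (fun n => g (nth n L dflt) - g dflt) (seq 0 N) = lsum (fun a => g a - g dflt) L.
Proof.
  revert N; induction L as [|a L IH]; intros N HN; simpl.
  - rewrite (lsum_ext_in _ (fun _ => 0)), lsum_zero; [reflexivity|].
    intros n _. destruct n; simpl; lra.
  - destruct N as [|N]; simpl in HN; [lia|]. simpl. rewrite <- seq_shift, lsum_map, IH by lia.
    reflexivity.
Qed.

Section Core.
Variable d : nat.
Variable S : Zd d -> Conf d -> R.
Variable r : R.
Variable p : nat -> Zd d.
Variable q : nat -> Z.
Hypothesis Hloc : local_pot S r.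
Hypothesis Hsub : forall j a b, S j (cmax a b) + S j (cmin a b) <= S j a + S j b.
Hypothesis Hcov : forall j k l x, S j (tau k l x) = S (vadd j k) x.
Hypothesis indep : lin_indep p.
Variable Lp : list (Zd d).
Hypothesis HLpN : NoDup Lp.
Hypothesis HLp : forall z, In z Lp <-> in_Bp p z.
Variable x : Conf d.
Hypothesis Hx : in_Xpq p q x.
Hypothesis Hmin : forall y, in_Xpq p q y -> W_B S Lp x <= W_B S Lp y.

Notation P := (Pv d p).
Notation rep := (rep d p indep Lp HLp).
Notation nrep := (nrep d p indep Lp HLp).

Lemma lsum_by_fibers (D : Zd d -> R) l :
  lsum D l = lsum (fun j => lsum D (filter (fun b => if Zd_eq_dec (rep b) j then true else false) l)) Lp.
Proof.
  induction l as [|b l IH]; simpl; [rewrite lsum_zero; reflexivity|].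
  rewrite (lsum_ext_in _ (fun j => (if Zd_eq_dec (rep b) j then D b else 0) +
     lsum D (filter (fun b0 => if Zd_eq_dec (rep b0) j then true else false) l)) Lp).
  - rewrite lsum_plus, (lsum_delta Zd_eq_dec), IH; auto using rep_in.
  - intros j _. destruct Zd_eq_dec; simpl; lra.
Qed.

Variable B : list (Zd d).
Variable y : Conf d.
Hypothesis HBN : NoDup B.
Hypothesis Hy : forall i, y i <> 0 -> in_interior r B i.
Hypothesis Hy0 : forall i, 0 <= y i.

Definition orbit_in_B (i : Zd d) : list (Zd d) :=
  filter (fun b => if Zd_eq_dec (rep b) (rep i) then true else false) B.

Definition fiber (j : Zd d) : list (Zd d) :=
  filter (fun b => if Zd_eq_dec (rep b) j then true else false) B.

Definition layer (n : nat) : Conf d := fun i => x i + nth n (rsort (map y (orbit_in_B i))) 0.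

Lemma layer_periodic n : in_Xpq p q (layer n).
Proof.
  intros j Hj i. unfold tau, layer. pose proof (Hx j Hj i) as Hxi. unfold tau in Hxi.
  assert (E : orbit_in_B (vadd i (p j)) = orbit_in_B i).
  { unfold orbit_in_B. rewrite <- (Pv_unit d p j Hj), rep_shift. reflexivity. }
  rewrite E. lra.
Qed.

Definition translate (n : nat -> Z) : Conf d := fun i => y (vadd i (P n)).

Lemma tau_perturbed n : tau (P n) (Qv d q n) (conf_add x y) = conf_add x (translate n).
Proof.
  apply functional_extensionality; intro i. unfold tau, conf_add, translate.
  pose proof (periodic_shift d p q x Hx n i). lra.
Qed.

Section NearSite.
Variable j : Zd d.
Hypothesis Hj : In j Lp.
Variable k : Zd d.
Hypothesis Hk : in_ball j r k.

Lemma orbit_from_fiber z : In z (orbit_in_B k) -> y z <> 0 ->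
  exists b, In b (fiber j) /\ vadd k (P (nrep b)) = z.
Proof.
  intros Hz Hnz. unfold orbit_in_B in Hz. apply filter_In in Hz as [_ Hzk].
  destruct (Zd_eq_dec (rep z) (rep k)) as [Ezk|]; [|discriminate].
  set (m := fun i => (nrep z i - nrep k i)%Z).
  pose proof (rep_same d p indep Lp HLp z k Ezk) as Ez. fold m in Ez.
  destruct (rep_uniq d p indep Lp HLp (vadd j (P m)) j m Hj eq_refl) as [Hrb Hnb].
  exists (vadd j (P m)). rewrite Hnb, <- Ez. split; [|reflexivity].
  apply filter_In. split; [|destruct Zd_eq_dec; congruence].
  destruct (Hy z Hnz) as [_ Hint]. apply Hint. unfold in_ball. rewrite Ez.
  rewrite norm1_vsub_shift, norm1_vsub_sym. exact Hk.
Qed.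

Lemma orbit_values_perm :
  Permutation (filter nonzero (map y (orbit_in_B k)))
              (filter nonzero (map (fun b => y (vadd k (P (nrep b)))) (fiber j))).
Proof.
  rewrite <- (map_map (fun b => vadd k (P (nrep b))) y), !(filter_map_swap nonzero y).
  apply Permutation_map.
  apply NoDup_Permutation.
  - apply NoDup_filter, NoDup_filter, HBN.
  - apply NoDup_filter, NoDup_map_NoDup_ForallPairs; [|apply NoDup_filter, HBN].
    intros a b Ha Hb E. unfold fiber in Ha, Hb. apply filter_In in Ha as [_ Ha], Hb as [_ Hb].
    destruct (Zd_eq_dec (rep a) j); [|discriminate]. destruct (Zd_eq_dec (rep b) j); [|discriminate].
    rewrite (rep_eq d p indep Lp HLp a), (rep_eq d p indep Lp HLp b).
    rewrite (vadd_cancel_l d _ _ _ E). congruence.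
  - intros z. rewrite !filter_In, nonzero_true. split.
    + intros [Hz Hnz]. destruct (orbit_from_fiber z Hz Hnz) as [b [Hb <-]].
      split; [apply in_map_iff; exists b; auto|auto].
    + intros [Hz Hnz]. split; [|auto]. apply in_map_iff in Hz as [b [<- _]].
      apply filter_In. split; [destruct (Hy _ Hnz); auto|].
      rewrite rep_shift. destruct Zd_eq_dec; auto.
Qed.

Lemma layer_eq_csort n :
  layer n k = nth n (csort d (map (fun b => conf_add x (translate (nrep b))) (fiber j))) x k.
Proof.
  set (L := map (fun b => y (vadd k (P (nrep b)))) (fiber j)).
  assert (Hpos : forall l : list (Zd d), Forall (fun v => 0 <= v) (map y l))
    by (intros l; apply Forall_forall; intros v Hv; apply in_map_iff in Hv as [? [<- _]]; auto).
  assert (HL : Forall (fun v => 0 <= v) L) by (unfold L; rewrite <- map_map; apply Hpos).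
  unfold layer. rewrite (rsort_nth_nonzero_perm _ L (Hpos _) HL orbit_values_perm).
  assert (Ecoord : forall l : list (Conf d), nth n l x k = nth n (map (fun o => o k) l) (x k))
    by (intros l; rewrite (map_nth (fun o : Conf d => o k)); reflexivity).
  rewrite Ecoord, csort_coord, map_map.
  replace (map _ (fiber j)) with (map (fun v => x k + v) L)
    by (unfold L; rewrite map_map; apply map_ext; reflexivity).
  rewrite rsort_shift.
  destruct (Nat.lt_ge_cases n (length (rsort L))) as [Hn|Hn].
  - rewrite (nth_indep (map (fun v => x k + v) (rsort L)) _ (x k + 0))
      by (rewrite length_map; auto).
    rewrite map_nth. reflexivity.
  - rewrite !nth_overflow by (rewrite ?length_map; auto). lra.
Qed.
End NearSite.

Lemma layers_at_site j : In j Lp ->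
  lsum (fun n => S j (layer n) - S j x) (seq 0 (length B)) <=
  lsum (fun b => S j (conf_add x (translate (nrep b))) - S j x) (fiber j).
Proof.
  intros Hj.
  set (A := map (fun b => conf_add x (translate (nrep b))) (fiber j)).
  assert (HA : (length (csort d A) <= length B)%nat).
  { rewrite csort_length. unfold A. rewrite length_map. apply filter_length_le. }
  rewrite (lsum_ext_in _ (fun n => S j (nth n (csort d A) x) - S j x)).
  2:{ intros n _. f_equal. apply Hloc. intros k Hk. apply layer_eq_csort; auto. }
  rewrite (lsum_nth_seq (S j)), !lsum_minus by exact HA.
  rewrite (lsum_const _ (csort d A) A) by (rewrite csort_length; reflexivity).
  rewrite (lsum_const _ A (fiber j)) by (unfold A; apply length_map).
  replace (lsum (fun b => S j (conf_add x (translate (nrep b)))) (fiber j)) with (lsum (S j) A)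
    by (unfold A; apply lsum_map).
  pose proof (csort_sum d (S j) (Hsub j) A). lra.
Qed.

(* The core inequality: W_B(x + y) - W_B(x) = Σ_{j ∈ B_p} Σ_{b ∈ fiber j}
   (S_j(x + translate) - S_j(x)) >= Σ_n (W_{p,q}(x^n) - W_{p,q}(x)) >= 0. *)
Lemma core_inequality : W_B S B x <= W_B S B (conf_add x y).
Proof.
  assert (Hlayers : 0 <= lsum (fun j => lsum (fun n => S j (layer n) - S j x) (seq 0 (length B))) Lp).
  { rewrite lsum_swap. apply lsum_nonneg. intros n _.
    pose proof (Hmin (layer n) (layer_periodic n)). unfold W_B in *.
    fold (lsum (fun j => S j (layer n)) Lp) (lsum (fun j => S j x) Lp) in *.
    rewrite lsum_minus. lra. }
  (* the energy of a translate at j is the energy of x + y at the site b *)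
  assert (Hfibers : lsum (fun j => lsum (fun b => S j (conf_add x (translate (nrep b))) - S j x) (fiber j)) Lp =
     lsum (fun b => S b (conf_add x y) - S b x) B).
  { rewrite (lsum_by_fibers _ B). apply lsum_ext_in. intros j _. apply lsum_ext_in. intros b Hb.
    unfold fiber in Hb. apply filter_In in Hb as [_ Hb]. destruct Zd_eq_dec as [Ej|]; [|discriminate].
    pose proof (rep_eq d p indep Lp HLp b) as Eb. rewrite Ej in Eb. rewrite Eb at 2 3.
    rewrite <- (Hcov j _ (Qv d q (nrep b)) (conf_add x y)), <- (Hcov j _ (Qv d q (nrep b)) x).
    rewrite tau_perturbed, (tau_periodic d p q x Hx). reflexivity. }
  pose proof (lsum_le_in _ _ Lp (fun j Hj => layers_at_site j Hj)) as Hsites.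
  rewrite Hfibers, lsum_minus in Hsites. unfold W_B.
  fold (lsum (fun j => S j x) B) (lsum (fun j => S j (conf_add x y)) B). lra.
Qed.
End Core.

Definition negc {d} (z : Conf d) : Conf d := fun i => - z i.

Lemma W_B_ext {d} (S S' : Zd d -> Conf d -> R) B z z' :
  (forall j, S j z = S' j z') -> W_B S B z = W_B S' B z'.
Proof. intros H. induction B; simpl; auto. rewrite H, IHB; auto. Qed.

Lemma W_B_submodular {d} (S : Zd d -> Conf d -> R) B :
  (forall j a b, S j (cmax a b) + S j (cmin a b) <= S j a + S j b) ->
  forall a b, W_B S B (cmax a b) + W_B S B (cmin a b) <= W_B S B a + W_B S B b.
Proof. intros H a b. induction B as [|j B IH]; simpl; [lra|]. specialize (H j a b). lra. Qed.

Section GlobalMinimizer.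
Variable d : nat.
Variable S : Zd d -> Conf d -> R.
Variable r : R.
Variable p : nat -> Zd d.
Variable q : nat -> Z.
Hypothesis Hloc : local_pot S r.
Hypothesis Hsub : forall j a b, S j (cmax a b) + S j (cmin a b) <= S j a + S j b.
Hypothesis Hcov : forall j k l x, S j (tau k l x) = S (vadd j k) x.
Hypothesis indep : lin_indep p.
Variable Lp : list (Zd d).
Hypothesis HLpN : NoDup Lp.
Hypothesis HLp : forall z, In z Lp <-> in_Bp p z.
Variable x : Conf d.
Hypothesis Hx : in_Xpq p q x.
Hypothesis Hmin : forall y, in_Xpq p q y -> W_B S Lp x <= W_B S Lp y.

(* The core inequality for y <= 0: apply it to the reflected potential
   z ↦ S(-z), for which -x is a minimizer on X_{p,-q}. *)
Lemma core_inequality_nonpos B y : NoDup B ->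
  (forall i, y i <> 0 -> in_interior r B i) -> (forall i, y i <= 0) ->
  W_B S B x <= W_B S B (conf_add x y).
Proof.
  intros HBN Hy Hy0.
  set (S' := fun j (z : Conf d) => S j (negc z)).
  assert (Hneg : forall z : Conf d, negc (negc z) = z)
    by (intros z; apply functional_extensionality; intro i; unfold negc; lra).
  assert (Hloc' : local_pot S' r).
  { intros j a b Hab. apply Hloc. intros k Hk. unfold negc. rewrite Hab; auto. }
  assert (Hsub' : forall j a b, S' j (cmax a b) + S' j (cmin a b) <= S' j a + S' j b).
  { intros j a b. unfold S'.
    replace (negc (cmax a b)) with (cmin (negc a) (negc b))
      by (apply functional_extensionality; intro i; unfold negc, cmax, cmin; symmetry; apply Ropp_Rmax).
    replace (negc (cmin a b)) with (cmax (negc a) (negc b))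
      by (apply functional_extensionality; intro i; unfold negc, cmax, cmin; symmetry; apply Ropp_Rmin).
    pose proof (Hsub j (negc a) (negc b)). lra. }
  assert (Hcov' : forall j k l z, S' j (tau k l z) = S' (vadd j k) z).
  { intros j k l z. unfold S'. rewrite <- (Hcov j k (- l)%Z). f_equal.
    apply functional_extensionality; intro i. unfold negc, tau. rewrite opp_IZR. lra. }
  assert (Hper : forall q' z, in_Xpq p q' z -> in_Xpq p (fun j => - q' j)%Z (negc z)).
  { intros q' z Hz j Hj i. pose proof (Hz j Hj i) as Hzi. unfold tau, negc in *.
    rewrite opp_IZR. lra. }
  assert (Hmin' : forall z, in_Xpq p (fun j => - q j)%Z z -> W_B S' Lp (negc x) <= W_B S' Lp z).
  { intros z Hz. unfold S'. rewrite (W_B_ext _ S Lp (negc x) x), (W_B_ext _ S Lp z (negc z))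
      by (intros; rewrite ?Hneg; reflexivity).
    apply Hmin. replace q with (fun j => - - q j)%Z by (apply functional_extensionality; intros; lia).
    apply Hper, Hz. }
  pose proof (core_inequality d S' r p _ Hloc' Hsub' Hcov' indep Lp HLpN HLp (negc x)
    (Hper q x Hx) Hmin' B (negc y) HBN) as H.
  unfold S' in H. rewrite (W_B_ext _ S B (negc x) x), (W_B_ext _ S B (conf_add (negc x) (negc y)) (conf_add x y)) in H.
  - apply H.
    + intros i Hi. apply Hy. unfold negc in Hi. lra.
    + intros i. unfold negc. specialize (Hy0 i). lra.
  - intros j. f_equal. apply functional_extensionality; intro i. unfold negc, conf_add. lra.
  - intros j. rewrite Hneg. reflexivity.
Qed.

(* The theorem for any local, submodular, covariant family of potentials:
   with y = y⁺ + y⁻ we have x + y⁺ = (x + y) ∨ x and x + y⁻ = (x + y) ∧ x, so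
   submodularity of W_B combines the two core inequalities. *)
Lemma submodular_global_minimizer : global_minimizer S r x.
Proof.
  intros B y HBN Hy.
  set (yp := fun i => Rmax (y i) 0). set (ym := fun i => Rmin (y i) 0).
  assert (Hp : W_B S B x <= W_B S B (conf_add x yp)).
  { apply (core_inequality d S r p q Hloc Hsub Hcov indep Lp HLpN HLp x Hx Hmin B yp HBN).
    - intros i Hi. apply Hy. unfold yp in Hi. intros E. rewrite E, Rmax_right in Hi; lra.
    - intros i. apply Rmax_r. }
  assert (Hm : W_B S B x <= W_B S B (conf_add x ym)).
  { apply core_inequality_nonpos; auto.
    - intros i Hi. apply Hy. unfold ym in Hi. intros E. rewrite E, Rmin_right in Hi; lra.
    - intros i. apply Rmin_r. }
  pose proof (W_B_submodular S B Hsub (conf_add x y) x) as Hsm.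
  replace (cmax (conf_add x y) x) with (conf_add x yp) in Hsm
    by (apply functional_extensionality; intro i; unfold cmax, conf_add, yp;
        unfold Rmax; repeat destruct Rle_dec; lra).
  replace (cmin (conf_add x y) x) with (conf_add x ym) in Hsm
    by (apply functional_extensionality; intro i; unfold cmin, conf_add, ym;
        unfold Rmin; repeat destruct Rle_dec; lra).
  lra.
Qed.
End GlobalMinimizer.

Theorem mainTheorem5 (d : nat) (S : Zd d -> Conf d -> R) (r : R)
  (D2 : Zd d -> Zd d -> Zd d -> Conf d -> R) :
  (* (A) *)
  0 < r -> local_pot S r -> C2_pot S r D2 ->
  (* (B) *)
  (forall j k l x, S j (tau k l x) = S (vadd j k) x) ->
  (* (C) *)
  (forall j, exists m, forall x, m <= S j x) ->
  (forall j k, norm1 (vsub k j) = 1%Z -> forall M, exists R0,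
      forall x, R0 < Rabs (x k - x j) -> M < S j x) ->
  (* (D) *)
  (forall j i k x, i <> k -> D2 j i k x <= 0) ->
  (forall i k x, norm1 (vsub i k) = 1%Z -> D2 i i k x < 0) ->
  (* (E) *)
  (exists C, forall j i k x, Rabs (D2 j i k x) <= C) ->
  forall (p : nat -> Zd d) (q : nat -> Z), lin_indep p ->
  (* Lp enumerates the finite set B_p, so W_{p,q} = W_B S Lp *)
  forall Lp : list (Zd d), NoDup Lp -> (forall z, In z Lp <-> in_Bp p z) ->
  forall x : Conf d, in_Xpq p q x ->
    (forall y, in_Xpq p q y -> W_B S Lp x <= W_B S Lp y) ->
    global_minimizer S r x.
Proof.
  intros _ Hloc HC2 Hcov _ _ HD _ _ p q Hind Lp HLpN HLp x Hx Hmin.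
  (* only locality, covariance and the sign of the mixed partials are needed *)
  exact (submodular_global_minimizer d S r p q Hloc (local_pot_submodular d S r D2 Hloc HC2 HD)
           Hcov Hind Lp HLpN HLp x Hx Hmin).
Qed.
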